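(* There is a classical winning strategy for the matching game with parameter $m=4$, and there is also a classical winning strategy for the matching game with parameter $m=6$.
   Context: A perfect matching on $\{0,\ldots,m-1\}$ ($m$ even) is a partition of this set into $m/2$ sets of cardinality 2; $M_m$ denotes the set of all perfect matchings on $\{0,\ldots,m-1\}$. Let $L=\lceil\log_2 m\rceil$. For $n\in\{0,\ldots,m-1\}$, $\bar n\in\{0,1\}^L$ denotes the binary representation of $n$ written with exactly $L$ bits, most significant bit first (padded with leading zeros). On bit strings, $\oplus$ is applied bitwise, and for $u,v\in\{0,1\}^L$, $u\cdot v=\bigoplus_{i}(u_i\wedge v_i)$. The matching game with parameter $m$: Alice receives $x=x_0\cdots x_{m-1}\in\{0,1\}^m$ and outputs $a\in\{0,1\}^L$; Bob receives $y\in M_m$ and outputs a two-element set $\{b_1,b_2\}\subseteq\{0,\ldots,m-1\}$ together with a string $b\in\{0,1\}^L$. They win on question $(x,y)$ iff $\{b_1,b_2\}\in y$ and $x_{b_1}\oplus x_{b_2}=(\bar b_1\oplus\bar b_2)\cdot(a\oplus b)$; every pair $(x,y)\in\{0,1\}^m\times M_m$ is a possible question. The players cannot communicate and share no entanglement. A classical deterministic strategy is a pair of functions $s_A$ (from Alice's inputs to her outputs) and $s_B$ (from Bob's inputs to his outputs); a classical (randomized) strategy is a probability distribution over classical deterministic strategies (shared randomness). A strategy is winning if it wins with certainty on every question. *)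

From HB Require Import structures.
From mathcomp Require Import all_boot all_order all_algebra.
Set Implicit Arguments. Unset Strict Implicit. Unset Printing Implicit Defensive.
Import Order.TTheory GRing.Theory Num.Theory.

(* L = ceil(log2 m) : the smallest e with m <= 2^e *)
Definition Lbits (m : nat) : nat := up_log 2 m.

(* bit strings of length L, indexed 0..L-1 (index 0 = most significant bit) *)
Definition bits (m : nat) := {ffun 'I_(Lbits m) -> bool}.

Definition bin (m : nat) (n : 'I_m) : bits m :=
  [ffun i : 'I_(Lbits m) => odd (n %/ 2 ^ ((Lbits m).-1 - i))].

Definition xorb_bits (m : nat) (u v : bits m) : bits m :=
  [ffun i => u i (+) v i].

Definition dotb (m : nat) (u v : bits m) : bool :=
  \big[addb/false]_(i < Lbits m) (u i && v i).

Definition is_perfect_matching (m : nat) (M : {set {set 'I_m}}) : bool :=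
  partition M [set: 'I_m] && [forall B in M, #|B| == 2].

Definition matching (m : nat) := {M : {set {set 'I_m}} | is_perfect_matching M}.

Definition alice_in (m : nat) := {ffun 'I_m -> bool}.
(* Bob outputs the two-element set {b1,b2} (as the pair (b1,b2)) and b *)
Definition bob_out (m : nat) := ('I_m * 'I_m * bits m)%type.

Definition det_strategy (m : nat) :=
  ({ffun alice_in m -> bits m} * {ffun matching m -> bob_out m})%type.

Definition wins (m : nat) (x : alice_in m) (y : matching m)
    (a : bits m) (ob : bob_out m) : bool :=
  let: (b1, b2, b) := ob in
  ([set b1; b2] \in val y) &&
  (x b1 (+) x b2 == dotb (xorb_bits (bin b1) (bin b2)) (xorb_bits a b)).

Definition det_wins (m : nat) (s : det_strategy m) (x : alice_in m) (y : matching m) : bool :=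
  wins x y (s.1 x) (s.2 y).

(* classical (randomized) strategy: a probability distribution over
   deterministic strategies (shared randomness) *)
Definition is_distribution (m : nat) (p : {ffun det_strategy m -> rat}) : Prop :=
  (forall s, 0 <= p s)%R /\ (\sum_(s : det_strategy m) p s = 1)%R.

Definition winning_classical (m : nat) (p : {ffun det_strategy m -> rat}) : Prop :=
  forall (x : alice_in m) (y : matching m),
    (\sum_(s : det_strategy m | det_wins s x y) p s = 1)%R.

Definition has_classical_winning_strategy (m : nat) : Prop :=
  exists p : {ffun det_strategy m -> rat}, is_distribution p /\ winning_classical p.

From mathcomp Require Import all_boot all_order all_algebra.
Set Implicit Arguments. Unset Strict Implicit. Unset Printing Implicit Defensive.
Import GRing.Theory Num.Theory.

(* Let S be a set of positions such that every perfect matching has a block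
   inside S (this holds as soon as 2 #|~: S| < m, since each block outside S
   uses a point of ~: S).  If the binary codes of the points of S are affinely
   independent, Alice can answer with a vector a such that the affine form
   v |-> v . a interpolates x on S up to a constant c.  Bob answers a block
   {i, j} inside S together with b = 0, and then
   (bin i + bin j) . a = (x_i + c) + (x_j + c) = x_i + x_j.
   For m = 4 one takes S = {0, 1, 2}, for m = 6 one takes S = {1, 3, 4, 5}. *)

Definition zero_bits (m : nat) : bits m := [ffun=> false].

Lemma xorb_bits0 m (u : bits m) : xorb_bits u (zero_bits m) = u.
Proof. by apply/ffunP => i; rewrite !ffunE addbF. Qed.

Lemma dotb_xorl m (u v w : bits m) :
  dotb (xorb_bits u v) w = dotb u w (+) dotb v w.
Proof.
by rewrite /dotb -big_split; apply: eq_bigr => i _; rewrite ffunE andb_addl.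
Qed.

Lemma perfect_matching_block_subset m (M : {set {set 'I_m}}) (S : {set 'I_m}) :
  is_perfect_matching M -> 2 * #|~: S| < m -> exists2 B, B \in M & B \subset S.
Proof.
case/andP=> partM /forall_inP cardM small; apply/exists_inP.
apply: contraTT small => /exists_inPn outS; rewrite -leqNgt.
have sizeM : m = #|M| * 2.
  rewrite -[m in LHS]card_ord -cardsT.
  by apply: card_uniform_partition partM => B /cardM/eqP.
have M_pblock : M \subset pblock M @: ~: S.
  apply/subsetP => B BM; have /subsetPn [x xB xS] := outS B BM.
  apply/imsetP; exists x; first by rewrite inE.
  by rewrite (def_pblock (partition_trivIset partM) BM xB).
apply: leq_trans (eq_leq sizeM) _; rewrite mulnC leq_mul2l /=.
exact: leq_trans (subset_leq_card M_pblock) (leq_imset_card _ _).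
Qed.

Lemma matching_pair_subset m (y : matching m) (S : {set 'I_m}) :
  2 * #|~: S| < m -> exists i j, [&& i \in S, j \in S & [set i; j] \in val y].
Proof.
case: y => M /= pmM /(perfect_matching_block_subset pmM) [B BM /subsetP BS].
have /cards2P [i [j [_ defB]]] := forall_inP (andP pmM).2 B BM.
exists i, j; rewrite -defB BM !BS ?andbT // defB !inE eqxx ?orbT //.
Qed.

Section AffineInterpolationStrategy.

Variables (m : nat) (S : {set 'I_m}) (alice : alice_in m -> bits m).

Definition interpolates_on :=
  forall x, exists c, {in S, forall i, dotb (bin i) (alice x) = x i (+) c}.

Definition block_in (y : matching m) (p : 'I_m * 'I_m) : bool :=
  [&& p.1 \in S, p.2 \in S & [set p.1; p.2] \in val y].

(* The default answer [i0] is never used: a block inside S always exists. *)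
Definition bob_answer (i0 : 'I_m) (y : matching m) : bob_out m :=
  if [pick p | block_in y p] is Some (i, j) then (i, j, zero_bits m)
  else (i0, i0, zero_bits m).

Definition interpolation_strategy (i0 : 'I_m) : det_strategy m :=
  ([ffun x => alice x], [ffun y => bob_answer i0 y]).

Hypotheses (alice_interpolates : interpolates_on) (S_large : 2 * #|~: S| < m).

Lemma interpolation_strategy_wins i0 x y :
  det_wins (interpolation_strategy i0) x y.
Proof.
rewrite /det_wins /= !ffunE /bob_answer.
case: pickP => [[i j] /and3P[/= iS jS ijy] | none]; last first.
  have [i [j ijS]] := matching_pair_subset y S_large.
  by move: (none (i, j)); rewrite /block_in ijS.
have [c alice_x] := alice_interpolates x.
rewrite /wins ijy xorb_bits0 dotb_xorl !alice_x //.
by case: (x i); case: (x j); case: (c).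
Qed.

End AffineInterpolationStrategy.

Local Open Scope ring_scope.

Lemma has_classical_winning_strategy_det m (s : det_strategy m) :
  (forall x y, det_wins s x y) -> has_classical_winning_strategy m.
Proof.
move=> s_wins; exists [ffun t => (t == s)%:R]; split; first split.
- by move=> t; rewrite ffunE ler0n.
- rewrite (bigD1 s) //= ffunE eqxx big1 ?addr0 // => t ts.
  by rewrite ffunE (negPf ts).
- move=> x y; rewrite (bigD1 s) ?s_wins //= ffunE eqxx big1 ?addr0 // => t.
  by case/andP=> _ ts; rewrite ffunE (negPf ts).
Qed.

Local Close Scope ring_scope.

(* Solving bin(i) . a = x_i + c for i in {0, 1, 2}, with c = x_0. *)
Definition alice4 (x : alice_in 4) : bits 4 :=
  [ffun t : 'I_(Lbits 4) =>
     nth false [:: x (inord 0) (+) x (inord 2); x (inord 0) (+) x (inord 1)] t].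

Definition S4 : {set 'I_4} := [set~ inord 3].

Lemma S4_large : 2 * #|~: S4| < 4.
Proof. by rewrite setCK cards1. Qed.

Lemma alice4_interpolates : interpolates_on S4 alice4.
Proof.
move=> x; exists (x (inord 0)); case=> i Hi.
rewrite -[Ordinal Hi]inord_val /= !inE; do 4?[case: i Hi => [|i] Hi].
all: rewrite ?eqxx // => _.
all: rewrite /dotb /bin !big_ord_recr big_ord0 /= !ffunE /= !inordK //=.
all: by move: (x (inord 0)) (x (inord 1)) (x (inord 2)); do !case.
Qed.

(* Solving bin(i) . a = x_i + c for i in {1, 3, 4, 5}, with c = x_1 + x_4 + x_5. *)
Definition alice6 (x : alice_in 6) : bits 6 :=
  [ffun t : 'I_(Lbits 6) =>
     nth false [:: x (inord 1) (+) x (inord 5); x (inord 1) (+) x (inord 3);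
                   x (inord 4) (+) x (inord 5)] t].

Definition S6 : {set 'I_6} := ~: [set inord 0; inord 2].

Lemma S6_large : 2 * #|~: S6| < 6.
Proof. by rewrite setCK cards2; case: (_ != _). Qed.

Lemma alice6_interpolates : interpolates_on S6 alice6.
Proof.
move=> x; exists (x (inord 1) (+) x (inord 4) (+) x (inord 5)).
case=> i Hi.
rewrite -[Ordinal Hi]inord_val /= !inE; do 6?[case: i Hi => [|i] Hi].
all: rewrite ?eqxx ?orbT // => _.
all: rewrite /dotb /bin !big_ord_recr big_ord0 /= !ffunE /= !inordK //=.
all: by move: (x (inord 1)) (x (inord 3)) (x (inord 4)) (x (inord 5)); do !case.
Qed.

Theorem theorem1 :
  has_classical_winning_strategy 4 /\ has_classical_winning_strategy 6.
Proof.
split; apply: has_classical_winning_strategy_det.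
- exact: interpolation_strategy_wins alice4_interpolates S4_large ord0.
- exact: interpolation_strategy_wins alice6_interpolates S6_large ord0.
Qed.
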